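(* Let $m,t\in\mathbb{N}$ with $m\le t$. For every tree $T$ on $t$ vertices there exist subtrees $S_0,S_1,\dots,S_\ell$ of $T$ whose edge sets partition $E(T)$, such that $|S_0|=m$ and $\ell\le \log_{3/2} t$. Moreover $|V(S_0)\cap V(S_j)|=1$ for every $j\in[\ell]$.
   Context: $|S|$ denotes the number of vertices of $S$; $[\ell]=\{1,\dots,\ell\}$. *)

From Stdlib Require Import Reals.
From mathcomp Require Import all_boot.

Set Implicit Arguments.
Unset Strict Implicit.
Unset Printing Implicit Defensive.

Section Graphs.
Variable V : finType.

Definition is_graph (A : {set V}) (F : {set {set V}}) : Prop :=
  forall f, f \in F -> (#|f| == 2) && (f \subset A).

Definition adj (F : {set {set V}}) : rel V := fun x y => [set x; y] \in F.

Definition gconnected (A : {set V}) (F : {set {set V}}) : Prop :=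
  forall x y, x \in A -> y \in A -> connect (adj F) x y.

Definition acyclic (F : {set {set V}}) : Prop :=
  forall c : seq V, uniq c -> 2 < size c -> ~~ cycle (adj F) c.

Definition is_tree (A : {set V}) (F : {set {set V}}) : Prop :=
  [/\ is_graph A F, A != set0, gconnected A F & acyclic F].

Definition is_subtree (A : {set V}) (F : {set {set V}})
    (B : {set V}) (G : {set {set V}}) : Prop :=
  [/\ B \subset A, G \subset F & is_tree B G].

End Graphs.

(* Root the tree at r and induct on its order.  Cutting an edge rc at the root
   splits the tree into the branch X through c (with the edge rc) and the rest Y,
   two subtrees sharing only r.  If Y is just r, decompose the branch rooted at c
   and glue rc onto S_0.  Otherwise let X be the smaller piece, so that
   3|X| <= 2|T|: if m <= |X|, decompose X and add Y as one more piece; if not,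
   decompose Y with target m - |X| + 1 and glue X onto S_0.  By induction
   3^l <= 2^l |T|, i.e. l <= log_{3/2} |T|. *)

From Stdlib Require Import Reals Lra.
From mathcomp Require Import all_boot zify.

Set Implicit Arguments.
Unset Strict Implicit.
Unset Printing Implicit Defensive.

Section Trees.
Variable V : finType.
Implicit Types (A B W : {set V}) (F G H : {set {set V}}).

Lemma adjC F : symmetric (adj F).
Proof. by move=> x y; rewrite /adj setUC. Qed.

Lemma connect_adjC F : connect_sym (adj F).
Proof. exact/sym_connect_sym/adjC. Qed.

Lemma adj_graph A F x y :
  is_graph A F -> adj F x y -> [/\ x \in A, y \in A & x != y].
Proof.
move=> gF /gF /andP[f2 /subsetP fA].
by rewrite !fA ?set21 ?set22 //; move: f2; rewrite cards2; case: (x != y).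
Qed.

Lemma graph_edge A F f : is_graph A F -> f \in F -> exists x y, x != y /\ f = [set x; y].
Proof. by move=> gF /gF /andP[/cards2P]. Qed.

Lemma graphS A F F' : F' \subset F -> is_graph A F -> is_graph A F'.
Proof. by move=> sFF gF f /(subsetP sFF) /gF. Qed.

Lemma acyclicS F F' : F' \subset F -> acyclic F -> acyclic F'.
Proof.
move=> sFF aF c uc sc; apply: contraNN (aF c uc sc); apply: sub_cycle => x y.
exact: (subsetP sFF).
Qed.

Lemma adjS F F' : F \subset F' -> subrel (adj F) (adj F').
Proof. by move=> sFF x y; apply: (subsetP sFF). Qed.

Lemma adj_setD1 F f x y : adj (F :\ f) x y = ([set x; y] != f) && adj F x y.
Proof. by rewrite /adj in_setD1. Qed.

Lemma graph_connect_closed A F x y :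
  is_graph A F -> x \in A -> connect (adj F) x y -> y \in A.
Proof.
move=> gF xA cxy; rewrite -(closed_connect _ cxy) //.
by move=> u v /(adj_graph gF) [-> ->].
Qed.

Lemma tree_neighbor W G r : is_tree W G -> r \in W -> 1 < #|W| ->
  exists c, [set r; c] \in G.
Proof.
case=> _ _ cG _ rW; rewrite (cardsD1 r) rW ltnS card_gt0.
case/set0Pn=> x /setD1P[xr xW].
have /connectP[[|y p] /= pth ex] := cG _ _ rW xW; first by rewrite ex eqxx in xr.
by case/andP: pth => ry _; exists y.
Qed.

Lemma tree_edges_neq0 W G : is_tree W G -> 1 < #|W| -> G != set0.
Proof.
move=> tW W2; have [r rW] : exists r, r \in W by case: tW => _ /set0Pn.
by have [c rcG] := tree_neighbor tW rW W2; apply/set0Pn; exists [set r; c].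
Qed.

Lemma set1_tree r : is_tree [set r] (set0 : {set {set V}}).
Proof.
split.
- by move=> f; rewrite inE.
- by apply/set0Pn; exists r; rewrite inE.
- by move=> x y /set1P-> /set1P->.
by move=> [|x [|y c]] //= _ _; rewrite /adj inE.
Qed.

Lemma edge_tree A G x y : is_graph A G -> acyclic G -> [set x; y] \in G ->
  is_tree [set x; y] [set [set x; y]].
Proof.
move=> gG aG xyG; have [_ _ xy] := adj_graph gG xyG.
split.
- by move=> f /set1P->; rewrite cards2 xy subxx.
- by apply/set0Pn; exists x; rewrite set21.
- have cxy : connect (adj [set [set x; y]]) x y by apply/connect1/set11.
  have cyx : connect (adj [set [set x; y]]) y x by rewrite connect_adjC.
  by move=> u v /set2P[]-> /set2P[]->.
by apply: acyclicS aG; rewrite sub1set.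
Qed.

Lemma tree_glue (X1 Y1 : {set V}) (X2 Y2 : {set {set V}}) v :
  is_tree X1 X2 -> is_tree Y1 Y2 -> v \in X1 -> v \in Y1 -> acyclic (X2 :|: Y2) ->
  is_tree (X1 :|: Y1) (X2 :|: Y2).
Proof.
case=> gX _ cX _ [gY _ cY _] vX vY aXY; split => //.
- move=> f /setUP[/gX|/gY] /andP[-> fS] /=; apply: subset_trans fS _.
    exact: subsetUl.
  exact: subsetUr.
- by apply/set0Pn; exists v; rewrite inE vX.
have to_v x : x \in X1 :|: Y1 -> connect (adj (X2 :|: Y2)) x v.
  case/setUP=> xS.
    by apply: connect_sub (cX _ _ xS vX) => ? ? /(adjS (subsetUl X2 Y2))/connect1.
  by apply: connect_sub (cY _ _ xS vY) => ? ? /(adjS (subsetUr X2 Y2))/connect1.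
by move=> x y xS yS; rewrite (connect_trans (to_v x xS)) // connect_adjC to_v.
Qed.

Definition component H u := [set x | connect (adj H) u x].
Definition component_edges H u := [set f in H | f \subset component H u].

Lemma component_refl H u : u \in component H u.
Proof. by rewrite inE connect0. Qed.

Lemma component_adj H u x y : adj H x y -> (x \in component H u) = (y \in component H u).
Proof.
move=> xy; rewrite !inE; apply/idP/idP => ux; apply: connect_trans ux _.
  exact: connect1.
by rewrite connect_adjC connect1.
Qed.

Lemma component_sub A H u : is_graph A H -> u \in A -> component H u \subset A.
Proof. by move=> gH uA; apply/subsetP => x; rewrite inE; apply: graph_connect_closed. Qed.

Lemma component_edges_sub H u : component_edges H u \subset H.
Proof. by apply/subsetP => f /setIdP[]. Qed.

Lemma adj_component_edges H u x y :
  x \in component H u -> adj H x y -> adj (component_edges H u) x y.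
Proof.
move=> ux xy; rewrite /adj inE [_ \in H]xy subUset !sub1set ux /=.
by rewrite -(component_adj u xy).
Qed.

Lemma component_path H u x p :
  x \in component H u -> path (adj H) x p -> path (adj (component_edges H u)) x p.
Proof.
elim: p x => //= y p IHp x ux /andP[xy pth].
by rewrite adj_component_edges // IHp // -(component_adj u xy).
Qed.

Lemma component_tree A H u :
  is_graph A H -> acyclic H -> is_tree (component H u) (component_edges H u).
Proof.
move=> gH aH; split.
- by move=> f /setIdP[/gH/andP[-> _] ->].
- by apply/set0Pn; exists u; apply: component_refl.
- have from_u x : x \in component H u -> connect (adj (component_edges H u)) u x.
    rewrite inE => /connectP[p pth ->]; apply/connectP; exists p => //.
    exact: component_path (component_refl H u) pth.
  by move=> x y ux uy; rewrite (connect_trans _ (from_u y uy)) // connect_adjC from_u.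
exact: acyclicS (component_edges_sub H u) aH.
Qed.

(* [wedge_acyclic] follows from the other fields; it is recorded rather than proved. *)
Record wedge W G (X1 : {set V}) (X2 : {set {set V}}) (Y1 : {set V}) (Y2 : {set {set V}})
    (v : V) : Prop := Wedge {
  wedge_treel : is_tree X1 X2;
  wedge_treer : is_tree Y1 Y2;
  wedge_cap : X1 :&: Y1 = [set v];
  wedge_disjoint : [disjoint X2 & Y2];
  wedge_vertices : W = X1 :|: Y1;
  wedge_edges : G = X2 :|: Y2;
  wedge_acyclic : acyclic G }.

Section Wedge.
Variables (W X1 Y1 : {set V}) (G X2 Y2 : {set {set V}}) (v : V).
Hypothesis wG : wedge W G X1 X2 Y1 Y2 v.

Lemma wedge_sym : wedge W G Y1 Y2 X1 X2 v.
Proof.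
case: wG => tX tY XY dXY EW EG aG.
by split; rewrite // 1?setIC 1?disjoint_sym // 1?setUC.
Qed.

Lemma wedge_mem : v \in X1 /\ v \in Y1.
Proof. by apply/andP; rewrite -in_setI (wedge_cap wG) set11. Qed.

Lemma wedge_capS B : B \subset Y1 -> X1 :&: B \subset [set v].
Proof. by move=> BY; rewrite -(wedge_cap wG) setIS. Qed.

Lemma wedge_tree : is_tree W G.
Proof.
have [vX vY] := wedge_mem; case: wG => tX tY _ _ EW EG aG.
by rewrite EW EG; apply: tree_glue vX vY _ => //; rewrite -EG.
Qed.

Lemma wedge_card : #|W|.+1 = #|X1| + #|Y1|.
Proof.
have [vX _] := wedge_mem; have X1_gt0 : 0 < #|X1| by apply/card_gt0P; exists v.
rewrite (wedge_vertices wG) cardsU (wedge_cap wG) cards1; lia.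
Qed.

Lemma wedge_trivialr : #|Y1| <= 1 -> W = X1 /\ G = X2.
Proof.
have [vX vY] := wedge_mem; case: wG => _ [gY _ _ _] _ _ EW EG _ Y1_le1.
have EY : Y1 = [set v] by apply/eqP; rewrite eq_sym eqEcard sub1set vY cards1.
have Y2_0 : Y2 = set0.
  apply/setP => f; rewrite inE; apply/negP => /gY/andP[/eqP f2 /subset_leq_card].
  by rewrite f2 EY cards1.
by rewrite EW EG EY Y2_0 setU0; split => //; apply/setUidPl; rewrite sub1set.
Qed.

End Wedge.

Section EdgeSplit.
Variables (W : {set V}) (G : {set {set V}}) (r c : V).
Hypotheses (tW : is_tree W G) (rcG : [set r; c] \in G).

Local Notation G' := (G :\ [set r; c]).

Let gG : is_graph W G. Proof. by case: tW. Qed.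
Let aG : acyclic G. Proof. by case: tW. Qed.
Let gG' : is_graph W G'. Proof. exact: graphS (subsetDl _ _) gG. Qed.

Lemma split_notin_component : r \notin component G' c.
Proof.
have [_ _ rc] := adj_graph gG rcG.
rewrite inE; apply/negP => /connectP[p pth].
case: (shortenP pth) => {pth} [[|y [|z q]]] pth uq _ /= r_last.
- by rewrite r_last eqxx in rc.
- by move: pth; rewrite /= andbT adj_setD1 -r_last setUC eqxx.
apply/negP: (aG uq isT); rewrite negbK /= rcons_path -r_last.
have /= /and3P[-> -> ->] := sub_path (adjS (subsetDl G [set [set r; c]])) pth.
exact: rcG.
Qed.

Lemma split_component_disjoint : component G' c :&: component G' r = set0.
Proof.
apply/setP => x; rewrite !inE; apply/negP => /andP[cx rx].
by apply: (negP split_notin_component); rewrite inE (connect_trans cx) // connect_adjC.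
Qed.

Lemma split_component_cover : W = component G' c :|: component G' r.
Proof.
have [rW cW _] := adj_graph gG rcG.
apply/eqP; rewrite eqEsubset subUset (component_sub gG' cW) (component_sub gG' rW) !andbT.
apply/subsetP => x xW; case: tW => _ _ cG _.
have /connectP[p pth ->] := cG _ _ rW xW.
case: (shortenP pth) => {pth} [[|y q]] /= pth uq _; first by rewrite inE component_refl orbT.
case/andP: pth => ry pth; move: uq; rewrite inE negb_or -andbA => /and3P[yr rq _].
have pth' : path (adj G') y q.
  apply: (sub_in_path (P := predC1 r)) pth => [u w ur wr uw|].
    rewrite adj_setD1 uw andbT; apply: contraTneq (set21 r c) => <-.
    by move: ur wr; rewrite !inE negb_or ![r == _]eq_sym => -> ->.
  by rewrite /= eq_sym yr all_predC has_pred1.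
have [yc|yc] := eqVneq y c.
  by rewrite yc in pth' *; apply/setUP; left; rewrite inE; apply/connectP; exists q.
have ry' : adj G' r y.
  rewrite adj_setD1 ry andbT; apply: contra_neq yc => E.
  have /set2P[yr'|//] : y \in [set r; c] by rewrite -E set22.
  by rewrite yr' eqxx in yr.
by apply/setUP; right; rewrite inE; apply/connectP; exists (y :: q) => //=; rewrite ry'.
Qed.

Lemma split_edges_cover :
  G = [set r; c] |: (component_edges G' c :|: component_edges G' r).
Proof.
have sub_G u : component_edges G' u \subset G.
  exact: subset_trans (component_edges_sub _ _) (subsetDl _ _).
apply/eqP; rewrite eqEsubset !subUset sub1set rcG !sub_G !andbT.
apply/subsetP => f fG; rewrite in_setU1; case: eqP => //= f_rc.
have [x [y [_ Ef]]] := graph_edge gG fG.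
have xy : adj G' x y by rewrite adj_setD1 /adj -Ef fG andbT; apply/eqP.
have [xW _ _] := adj_graph gG' xy.
rewrite Ef; move: xW; rewrite split_component_cover.
case/setUP=> /adj_component_edges/(_ xy) xy'.
  by apply/setUP; left.
by apply/setUP; right.
Qed.

Lemma split_component_edges_disjoint :
  [disjoint component_edges G' c & component_edges G' r].
Proof.
rewrite -setI_eq0; apply/eqP/setP => f; rewrite in_set0.
apply/negP => /setIP[/setIdP[fG fC] /setIdP[_ fR]].
have /andP[/eqP f2 _] := gG' fG.
have : f \subset set0 by rewrite -split_component_disjoint subsetI fC fR.
by rewrite subset0 => /eqP f0; rewrite f0 cards0 in f2.
Qed.

Lemma split_wedge_edge :
  wedge ([set r; c] :|: component G' c) ([set [set r; c]] :|: component_edges G' c)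
        [set r; c] [set [set r; c]] (component G' c) (component_edges G' c) c.
Proof.
have [_ _ rc] := adj_graph gG rcG.
split => //.
- exact: edge_tree gG aG rcG.
- exact: component_tree gG' (acyclicS (subsetDl _ _) aG).
- apply/setP => x; rewrite in_setI in_set2 in_set1; have [->|_] := eqVneq x r.
    by rewrite (negbTE split_notin_component) andbF (negbTE rc).
  by case: eqP => [->|]; rewrite ?component_refl.
- by rewrite disjoints1 inE setD11.
apply: acyclicS aG; rewrite subUset sub1set rcG.
exact: subset_trans (component_edges_sub _ _) (subsetDl _ _).
Qed.

Lemma split_wedge :
  wedge W G ([set r; c] :|: component G' c) ([set [set r; c]] :|: component_edges G' c)
        (component G' r) (component_edges G' r) r.
Proof.
have c_notin_R : c \notin component G' r.
  apply/negP => cR; have : c \in component G' c :&: component G' r.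
    by rewrite inE component_refl.
  by rewrite split_component_disjoint inE.
split => //.
- exact: wedge_tree split_wedge_edge.
- exact: component_tree gG' (acyclicS (subsetDl _ _) aG).
- rewrite setIUl split_component_disjoint setU0; apply/setP => x.
  rewrite in_setI in_set2 in_set1; have [->|_] := eqVneq x r; first by rewrite component_refl.
  by case: eqP => // ->; rewrite (negbTE c_notin_R).
- rewrite -setI_eq0 setIUl setU_eq0 !setI_eq0 split_component_edges_disjoint andbT.
  by rewrite disjoints1 inE setD11.
- rewrite {1}split_component_cover; apply/setP => x; rewrite !in_setU !in_set1.
  have [->|_] := eqVneq x r; first by rewrite component_refl !orbT.
  by have [->|_] := eqVneq x c; rewrite ?component_refl ?eqxx ?orbT.
- by rewrite -setUA; exact: split_edges_cover.
Qed.

End EdgeSplit.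

(* The root [r] of [S 0] is not part of the theorem: it is where the induction
   glues further pieces onto [S 0]. *)
Record decomp W G (r : V) (m l : nat) (S : nat -> {set V} * {set {set V}}) : Prop :=
  Decomp {
  decomp_subtree : forall i, i <= l -> is_subtree W G (S i).1 (S i).2;
  decomp_disjoint : forall i j, i <= l -> j <= l -> i != j -> [disjoint (S i).2 & (S j).2];
  decomp_cover : G = \bigcup_(i < l.+1) (S i).2;
  decomp_neq0 : forall j, 1 <= j <= l -> (S j).2 != set0;
  decomp_card : #|(S 0).1| = m;
  decomp_root : r \in (S 0).1;
  decomp_cap : forall j, 1 <= j <= l -> #|(S 0).1 :&: (S j).1| = 1 }.

Lemma subset_cap1 A B C v : A \subset B -> v \in A -> B :&: C = [set v] -> A :&: C = [set v].
Proof.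
move=> AB vA BC; have /setIP[_ vC] : v \in B :&: C by rewrite BC set11.
by apply/eqP; rewrite eqEsubset sub1set inE vA vC andbT -BC setSI.
Qed.

Lemma decomp_attach W G X1 X2 Y1 Y2 r m l S :
  wedge W G X1 X2 Y1 Y2 r -> Y2 != set0 -> decomp X1 X2 r m l S ->
  decomp W G r m l.+1 (fun i => if i <= l then S i else (Y1, Y2)).
Proof.
move=> wG Y2_neq0 [Ssub Sdisj Scup Sne Scard Sroot Scap].
have S_in_X i : i <= l -> ((S i).1 \subset X1) * ((S i).2 \subset X2) by case/Ssub.
have S0Y : (S 0).1 :&: Y1 = [set r].
  exact: subset_cap1 (S_in_X 0 (leq0n l)).1 Sroot (wedge_cap wG).
case: wG => _ tY _ dXY -> -> _; split => /=.
- move=> i _; case: leqP => il; last by split; rewrite ?subsetUr.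
  by case: (Ssub i il) => s1 s2 tS; split; rewrite // subsetU ?s1 ?s2.
- move=> i j il jl ij; case: leqP => il'; case: leqP => jl'.
  + exact: Sdisj.
  + exact: disjointWl (S_in_X i il').2 dXY.
  + by rewrite disjoint_sym; exact: disjointWl (S_in_X j jl').2 dXY.
  + lia.
- rewrite big_ord_recr /= ltnn Scup; congr (_ :|: _).
  by apply: eq_bigr => i _; rewrite -ltnS ltn_ord.
- move=> j /andP[j1 _]; case: leqP => // jl.
  by apply: Sne; rewrite j1.
- exact: Scard.
- exact: Sroot.
move=> j /andP[j1 _]; case: leqP => jl; first by apply: Scap; rewrite j1.
by rewrite S0Y cards1.
Qed.

Lemma decomp_absorb W G X1 X2 Y1 Y2 v r m l S :
  wedge W G X1 X2 Y1 Y2 v -> r \in X1 -> decomp Y1 Y2 v m l S ->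
  decomp W G r (#|X1| + m - 1) l
    (fun i => if i == 0 then (X1 :|: (S 0).1, X2 :|: (S 0).2) else S i).
Proof.
move=> wG rX [Ssub Sdisj Scup Sne Scard Sroot Scap].
have [vX _] := wedge_mem wG.
have S_in_Y i : i <= l -> ((S i).1 \subset Y1) * ((S i).2 \subset Y2) by case/Ssub.
have XS0 : X1 :&: (S 0).1 = [set v].
  by rewrite setIC (subset_cap1 (S_in_Y 0 (leq0n l)).1 Sroot) // setIC (wedge_cap wG).
have XSj j : j <= l -> X1 :&: (S j).1 \subset (S 0).1 :&: (S j).1.
  move=> jl; apply/subsetP => x xXS; have /setIP[_ xSj] := xXS.
  have /set1P xv := subsetP (wedge_capS wG (S_in_Y j jl).1) x xXS.
  by rewrite inE xSj xv Sroot.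
have X2Sj j : j <= l -> [disjoint X2 & (S j).2].
  by move=> jl; apply: disjointWr (S_in_Y j jl).2 (wedge_disjoint wG).
case: wG => tX _ _ _ -> EG aG; split => /=.
- have sYG : Y2 \subset G by rewrite EG subsetUr.
  case=> [|i] il /=; case: (Ssub _ il) => s1 s2 tS.
    split; [exact: setUS | rewrite EG; exact: setUS |].
    apply: tree_glue tX tS vX Sroot _; apply: acyclicS aG.
    by rewrite EG; apply: setUS.
  by split; [exact: subset_trans s1 (subsetUr _ _) | exact: subset_trans s2 sYG |].
- have disjX2 j : j <= l -> 0 != j -> [disjoint X2 :|: (S 0).2 & (S j).2].
    move=> jl j0; rewrite -setI_eq0 setIUl setU_eq0 !setI_eq0 X2Sj //.
    exact: Sdisj.
  case=> [|i] [|j] //= il jl ij; first exact: disjX2.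
    by rewrite disjoint_sym; apply: disjX2.
  exact: Sdisj.
- by rewrite EG Scup !big_ord_recl /= -setUA.
- by case=> [|j] // jl; apply: Sne.
- by rewrite cardsU XS0 cards1 Scard.
- by rewrite inE rX.
by case=> [|j] // jl /=; rewrite setIUl (setUidPr (XSj _ _)) ?Scap //; case/andP: jl.
Qed.

(* [3 ^ l <= 2 ^ l * #|W|] is [l <= log_{3/2} #|W|] without logarithms. *)
Definition decomposable W G r m :=
  exists l S, decomp W G r m l S /\ 3 ^ l <= 2 ^ l * #|W|.

Lemma decomposable_full W G r : is_tree W G -> r \in W -> decomposable W G r #|W|.
Proof.
move=> tW rW; exists 0, (fun _ => (W, G)); split.
  split=> /=.
  - by move=> i _; split.
  - by move=> [|i] [|j].
  - by rewrite big_ord1.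
  - by move=> [|j] /andP[].
  - by [].
  - exact: rW.
  - by move=> [|j] /andP[].
by rewrite mul1n card_gt0; apply/set0Pn; exists r.
Qed.

Lemma decomposable_one W G r : is_tree W G -> r \in W -> 1 < #|W| -> decomposable W G r 1.
Proof.
move=> tW rW W2; exists 1, (fun i => if i == 0 then ([set r], set0) else (W, G)).
split; last by rewrite !expn1; lia.
split=> //=.
- case=> [|[|i]] // _ /=; split => //; first by rewrite sub1set.
    by rewrite sub0set.
  exact: set1_tree.
- by case=> [|[|i]] [|[|j]] //= _ _ _; rewrite -setI_eq0 ?set0I ?setI0.
- by rewrite big_ord_recl big_ord1 /= set0U.
- by case=> [|[|j]] //= _; exact: tree_edges_neq0 tW W2.
- exact: cards1.
- exact: set11.
by case=> [|[|j]] // _; rewrite (setIidPl _) ?cards1 // sub1set.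
Qed.

Lemma decomposable_attach W G X1 X2 Y1 Y2 r m :
  wedge W G X1 X2 Y1 Y2 r -> 1 < #|Y1| -> #|X1| <= #|Y1| ->
  decomposable X1 X2 r m -> decomposable W G r m.
Proof.
move=> wG Y_gt1 XY [l [S [dS le_3l]]].
exists l.+1, (fun i => if i <= l then S i else (Y1, Y2)); split.
  exact: decomp_attach wG (tree_edges_neq0 (wedge_treer wG) Y_gt1) dS.
have cardW := wedge_card wG.
(* [#|X1| <= #|Y1|] and [1 < #|Y1|] give [3 * #|X1| <= 2 * #|W|]. *)
rewrite !expnS (leq_trans (leq_mul (leqnn 3) le_3l)) // mulnCA [2 * _]mulnC -mulnA leq_mul2l.
by apply/orP; right; lia.
Qed.

Lemma decomposable_absorb W G X1 X2 Y1 Y2 v r m :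
  wedge W G X1 X2 Y1 Y2 v -> r \in X1 -> decomposable Y1 Y2 v m ->
  decomposable W G r (#|X1| + m - 1).
Proof.
move=> wG rX [l [S [dS le_3l]]].
exists l, (fun i => if i == 0 then (X1 :|: (S 0).1, X2 :|: (S 0).2) else S i); split.
  exact: decomp_absorb wG rX dS.
have cardW := wedge_card wG; have X_gt0 : 0 < #|X1| by apply/card_gt0P; exists r.
by rewrite (leq_trans le_3l) // leq_mul2l; apply/orP; right; lia.
Qed.

Lemma decomposable_wedge W G X1 X2 Y1 Y2 r m :
  wedge W G X1 X2 Y1 Y2 r -> 1 < #|X1| -> 1 < #|Y1| ->
  (forall k, 0 < k <= #|X1| -> decomposable X1 X2 r k) ->
  (forall k, 0 < k <= #|Y1| -> decomposable Y1 Y2 r k) ->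
  0 < m <= #|W| -> decomposable W G r m.
Proof.
wlog XY : X1 X2 Y1 Y2 / #|X1| <= #|Y1|.
  move=> gen wG X_gt1 Y_gt1 dX dY; have [|/ltnW YX] := leqP #|X1| #|Y1|.
    by move=> XY; apply: gen wG X_gt1 Y_gt1 dX dY.
  exact: gen (wedge_sym wG) Y_gt1 X_gt1 dY dX.
move=> wG X_gt1 Y_gt1 dX dY /andP[m_gt0 m_le]; have cardW := wedge_card wG.
have [mX|Xm] := leqP m #|X1|; first by apply/(decomposable_attach wG)/dX; rewrite ?m_gt0.
have -> : m = #|X1| + (m - #|X1|).+1 - 1 by lia.
by apply: decomposable_absorb wG (wedge_mem wG).1 (dY _ _); lia.
Qed.

Lemma decomposable_tree W G r m :
  is_tree W G -> r \in W -> 0 < m <= #|W| -> decomposable W G r m.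
Proof.
have [n] := ubnP #|W|; elim: n W G r m => // n IHn W G r m /ltnSE W_le_n tW rW.
have IH W' G' r' k : #|W'| < #|W| -> is_tree W' G' -> r' \in W' -> 0 < k <= #|W'| ->
    decomposable W' G' r' k.
  by move=> ltW; apply: IHn; apply: leq_trans ltW W_le_n.
move=> /andP[m_gt0 m_le]; have [->|m_neq] := eqVneq m #|W|; first exact: decomposable_full.
have W_gt1 : 1 < #|W| by lia.
have [->|m_neq1] := eqVneq m 1; first exact: decomposable_one.
have [c rcG] := tree_neighbor tW rW W_gt1.
have [_ _ rc] : [/\ r \in W, c \in W & r != c].
  by case: tW => gW _ _ _; apply: adj_graph gW rcG.
have wX := split_wedge_edge tW rcG; have wW := split_wedge tW rcG.
set C := component _ c in wX wW; set R := component _ r in wW.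
set GR := component_edges _ r in wW.
set X1 := [set r; c] :|: C in wX wW; set X2 := _ :|: component_edges _ c in wX wW.
have X_gt1 : 1 < #|X1| by have := subset_leq_card (subsetUl [set r; c] C); rewrite cards2 rc.
have [R_le1|R_gt1] := leqP #|R| 1.
  have [EW EG] := wedge_trivialr wW R_le1; rewrite -EW -EG in wX.
  have cardW := wedge_card wX; rewrite cards2 rc in cardW.
  have -> : m = #|[set r; c]| + m.-1 - 1 by rewrite cards2 rc; lia.
  apply: decomposable_absorb wX (set21 r c) (IH _ _ _ _ _ (wedge_treer wX) _ _).
  - lia.
  - exact: component_refl.
  - lia.
have cardW := wedge_card wW.
have dX k : 0 < k <= #|X1| -> decomposable X1 X2 r k.
  by apply: IH (wedge_treel wW) _; [lia | rewrite !inE eqxx].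
have dR k : 0 < k <= #|R| -> decomposable R GR r k.
  by apply: IH (wedge_treer wW) (component_refl _ _); lia.
by apply: decomposable_wedge wW X_gt1 R_gt1 dX dR _; rewrite m_gt0.
Qed.

End Trees.

Section Log32.
Local Open Scope R_scope.

Lemma INR_expn m n : INR (m ^ n)%N = INR m ^ n.
Proof. by elim: n => //= n IHn; rewrite expnS -multE mult_INR IHn. Qed.

Lemma ln_le x y : 0 < x -> x <= y -> ln x <= ln y.
Proof. by move=> x_gt0 [/(ln_increasing _ _ x_gt0)/Rlt_le|->] //; apply: Rle_refl. Qed.

Lemma le_log32 l t : (3 ^ l <= 2 ^ l * t)%N -> INR l <= ln (INR t) / ln (INR 3 / INR 2).
Proof.
move=> le_3l; have t_gt0 : 0 < INR t.
  by apply/lt_0_INR/ltP; move: le_3l; case: t => //; rewrite muln0 leqn0 expn_eq0.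
have le_3lR : INR 3 ^ l <= INR 2 ^ l * INR t.
  by rewrite -!INR_expn -mult_INR; apply/le_INR/leP.
have [E3 E2] : INR 3 = 3 /\ INR 2 = 2 by rewrite /=; split; lra.
rewrite E3 E2 in le_3lR *.
have ln32 : ln (3 / 2) = ln 3 - ln 2 by rewrite ln_mult ?ln_Rinv; lra.
have ln32_gt0 : 0 < ln (3 / 2) by rewrite -ln_1; apply: ln_increasing; lra.
have p2 : 0 < 2 ^ l by apply: pow_lt; lra.
have := ln_le (pow_lt 3 l ltac:(lra)) le_3lR.
rewrite ln_mult // !ln_pow; try lra.
move=> le_ln; apply: (Rmult_le_reg_r _ _ _ ln32_gt0).
rewrite /Rdiv Rmult_assoc Rinv_l ?ln32; lra.
Qed.

End Log32.

Theorem corollary3p6 (V : finType) (A : {set V}) (F : {set {set V}})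
    (m t : nat) :
  is_tree A F -> #|A| = t -> 1 <= m -> m <= t ->
  exists (l : nat) (S : nat -> {set V} * {set {set V}}),
    (forall i, i <= l -> is_subtree A F (S i).1 (S i).2) /\
    (forall i j, i <= l -> j <= l -> i != j ->
        [disjoint (S i).2 & (S j).2]) /\
    F = \bigcup_(i < l.+1) (S i).2 /\
    (forall j, 1 <= j <= l -> (S j).2 != set0) /\
    #|(S 0).1| = m /\
    Rle (INR l) (Rdiv (ln (INR t)) (ln (Rdiv (INR 3) (INR 2)))) /\
    (forall j, 1 <= j <= l -> #|(S 0).1 :&: (S j).1| = 1).
Proof.
move=> tA <- m_gt0 m_le; have m_range : 0 < m <= #|A| by rewrite m_gt0.
have [r rA] : exists r, r \in A by case: tA => _ /set0Pn.
have [l [S [[Ssub Sdisj Scup Sne Scard _ Scap] le_3l]]] := decomposable_tree tA rA m_range.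
by exists l, S; do !split => //; apply: le_log32.
Qed.
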